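(* Let $X=(X_1,\ldots,X_q)^T$ be a vector of mutually independent Poisson random variables with means $\lambda=(\lambda_1,\ldots,\lambda_q)^T$. Let $A=(a_{i,j}) \in \{0,1\}^{\ell\times q}$ have pairwise distinct nonzero columns and let $Y = AX$, with cumulant generating function $K_Y(t)=\log E[e^{t^TY}]$. Let $\mathcal B_0 = \{0,1\}^\ell\setminus\{0\}$ with the componentwise order $\le$ (and $<$ meaning $\le$ and $\neq$), let $\mathcal A\subseteq\mathcal B_0$ be the set of columns of $A$, and let $\rho:\mathcal B_0\to\mathbb{R}$ be $\rho(a_{*,j})=\lambda_j$ and $\rho(v)=0$ for $v\notin\mathcal A$. For $v\in\mathcal B_0$ with support $\{i_1<\cdots<i_p\}$ let $\phi(v)=\frac{\partial^p}{\partial t_{i_1}\cdots\partial t_{i_p}}K_Y(t)\big|_{t=0}$. Let $\uparrow v=\{w\in\mathcal B_0: v\le w\}$ and define $\psi:\mathcal B_0\to\mathbb{R}$ as the solution of the recurrence \[\psi(v) = \phi(v) - \sum_{w\in \uparrow v\setminus\{v\}}\psi(w)\quad (v\in\mathcal B_0).\] Then $\psi(v)=\rho(v)$ for every $v\in\mathcal B_0$. Moreover, if $\psi(v)\neq 0$, then $v\in\mathcal A$.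
   Context: The recurrence determines $\psi$ uniquely since $\mathcal B_0$ is finite and $\psi(v)$ depends only on values at strictly larger elements. $a_{*,j}$ is the $j$-th column of $A$. *)

From HB Require Import structures.
From mathcomp Require Import all_boot all_order all_algebra.
From mathcomp Require Import all_classical all_reals all_analysis.

Set Implicit Arguments.
Unset Strict Implicit.
Unset Printing Implicit Defensive.

Import Order.TTheory GRing.Theory Num.Theory.
Import numFieldNormedType.Exports.

Local Open Scope classical_set_scope.
Local Open Scope ring_scope.

Notation bvec l := {ffun 'I_l -> bool}.

Definition bzero (l : nat) : bvec l := [ffun => false].

Definition inB0 (l : nat) (v : bvec l) : bool := v != bzero l.

Definition ble (l : nat) (v w : bvec l) : bool := [forall i, v i ==> w i].
Definition blt (l : nat) (v w : bvec l) : bool := ble v w && (v != w).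

Definition colv (l q : nat) (A : 'M[bool]_(l, q)) (j : 'I_q) : bvec l :=
  [ffun i => A i j].

Definition inColumns (l q : nat) (A : 'M[bool]_(l, q)) (v : bvec l) : bool :=
  [exists j, colv A j == v].

Definition rho (R : realType) (l q : nat) (A : 'M[bool]_(l, q))
  (lambda : 'I_q -> R) (v : bvec l) : R :=
  match [pick j | colv A j == v] with
  | Some j => lambda j
  | None => 0
  end.

Definition mutually_independent d (T : measurableType d) (R : realType)
  (P : probability T R) (q : nat) (X : 'I_q -> {RV P >-> nat}) : Prop :=
  forall (J : {set 'I_q}) (B : 'I_q -> set nat),
    (forall j, measurable (B j)) ->
    P (\bigcap_(j in [set j | j \in J]) (X j @^-1` B j)) =
    (\prod_(j in J) P (X j @^-1` B j))%E.

Definition is_poisson d (T : measurableType d) (R : realType)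
  (P : probability T R) (X : {RV P >-> nat}) (lam : R) : Prop :=
  forall U : set nat, measurable U ->
    distribution P X U = poisson_prob lam 0%N U.

Definition Yvec d (T : measurableType d) (R : realType) (P : probability T R)
  (l q : nat) (A : 'M[bool]_(l, q)) (X : 'I_q -> {RV P >-> nat})
  (i : 'I_l) (w : T) : R :=
  \sum_(j < q) (A i j)%:R * (X j w)%:R.

Definition cgf d (T : measurableType d) (R : realType) (P : probability T R)
  (l : nat) (Y : 'I_l -> T -> R) (t : 'rV[R]_l) : R :=
  ln (fine ('E_P[fun w => expR (\sum_(i < l) t ord0 i * Y i w)])).

Definition evec (R : realType) (l : nat) (i : 'I_l) : 'rV[R]_l :=
  delta_mx ord0 i.

Definition partial (R : realType) (l : nat) (i : 'I_l)
  (f : 'rV[R]_l -> R) : 'rV[R]_l -> R :=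
  fun t => derive f t (evec R i).

Definition mixed_partial (R : realType) (l : nat) (s : seq 'I_l)
  (f : 'rV[R]_l -> R) : 'rV[R]_l -> R :=
  foldr (@partial R l) f s.

Definition support_seq (l : nat) (v : bvec l) : seq 'I_l :=
  [seq i <- enum 'I_l | v i].

Definition phi (R : realType) (l : nat) (K : 'rV[R]_l -> R) (v : bvec l) : R :=
  mixed_partial (support_seq v) K 0.

(* For independent Poisson variables, E[prod_j z_j^X_j] = prod_j exp(lambda_j (z_j - 1)),
   obtained by monotone convergence from the generating functions truncated at
   X_j < N.  With z_j = exp <t, a_j> this gives
   K_Y(t) = sum_j lambda_j (exp <t, a_j> - 1), and differentiating once in each
   coordinate of the support of v kills exactly the terms with not (v <= a_j):
   phi(v) = sum_(a_j >= v) lambda_j = sum_(w >= v) rho(w).  The recurrence for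
   psi is the Moebius inversion of this upper sum on the boolean lattice, so
   psi = rho, and rho vanishes off the columns of A. *)

From HB Require Import structures.
From mathcomp Require Import all_boot all_order all_algebra.
From mathcomp Require Import all_classical all_reals all_analysis.
From mathcomp Require Import measurable_realfun.

Set Implicit Arguments.
Unset Strict Implicit.
Unset Printing Implicit Defensive.

Import Order.TTheory GRing.Theory Num.Theory.
Import numFieldNormedType.Exports.
Local Open Scope ring_scope.

Lemma is_derive_along_line (R : realType) (V : normedModType R) (f : V -> R)
    (g : R -> R) (x v : V) (y dg : R) :
  (forall h, f (h *: v + x) = g (h + y)) ->
  is_derive y 1 g dg -> is_derive x v f dg.
Proof.
move=> fg [dgy <-].
have fx : f x = g y by rewrite -[x]add0r -(scale0r v) fg add0r.
have quot : (fun h : R => h^-1 *: ((f \o shift x) (h *: v) - f x)) =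
            (fun h : R => h^-1 *: ((g \o shift y) (h *: (1 : R^o)) - g y)).
  by apply/funext => h /=; rewrite /shift fg fx [_%:A]mulr1.
by apply: DeriveDef; rewrite /derivable /derive quot.
Qed.

Section ExponentialSums.
Variables (R : realType) (l q : nat) (A : 'M[bool]_(l, q)).

Definition col_dot (t : 'rV[R]_l) (j : 'I_q) : R :=
  \sum_(i < l) t ord0 i * (A i j)%:R.

Definition expsum (b : 'I_q -> R) (t : 'rV[R]_l) : R :=
  \sum_(j < q) b j * expR (col_dot t j).

Lemma col_dot_shift (h : R) i t j :
  col_dot (h *: evec R i + t) j = h * (A i j)%:R + col_dot t j.
Proof.
rewrite /col_dot (bigD1 i) //= [in RHS](bigD1 i) //= !mxE !eqxx mulr1 mulrDl.
rewrite addrA; congr (_ + _); apply: eq_bigr => k /negbTE ki.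
by rewrite !mxE ki mulr0 add0r.
Qed.

Lemma is_derive_expR_col_dot t i j :
  is_derive t (evec R i) (fun t => expR (col_dot t j))
            ((A i j)%:R * expR (col_dot t j)).
Proof.
case Aij: (A i j).
- apply: (@is_derive_along_line _ _ _ expR _ _ (col_dot t j)).
    by move=> h; rewrite col_dot_shift Aij mulr1.
  by rewrite mul1r; exact: is_derive_expR.
- apply: (@is_derive_along_line _ _ _ (cst (expR (col_dot t j))) _ _ 0).
    by move=> h; rewrite col_dot_shift Aij mulr0 add0r.
  by rewrite mul0r; exact: is_derive_cst.
Qed.

Lemma is_derive_expsum b k t i :
  is_derive t (evec R i) (fun t => expsum b t + k)
            (expsum (fun j => b j * (A i j)%:R) t).
Proof.
have -> : (fun t => expsum b t + k) =
          \sum_(j < q) (b j \*: (fun t => expR (col_dot t j))) + cst k.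
  by apply/funext => s; rewrite /expsum fct_sumE.
have dsum := is_derive_sum (fun j => is_deriveZ (b j) (is_derive_expR_col_dot t i j)).
apply: (is_derive_eq (is_deriveD dsum (is_derive_cst k t (evec R i)))).
rewrite addr0 /expsum; apply: eq_bigr => j _.
by rewrite /GRing.scale /= mulrA.
Qed.

Lemma mixed_partial_expsum b k (s : seq 'I_l) :
  mixed_partial s (fun t => expsum b t + k) =
  fun t => expsum (fun j => b j * \prod_(i <- s) (A i j)%:R) t
           + (if s is [::] then k else 0).
Proof.
elim: s => [|i s IH] /=.
  by apply/funext => t; congr (_ + _); apply: eq_bigr => j _; rewrite big_nil mulr1.
rewrite IH; apply/funext => t; rewrite /partial.
have [_ ->] := is_derive_expsum (fun j => b j * \prod_(i <- s) (A i j)%:R)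
                                (if s is [::] then k else 0) t i.
rewrite addr0; apply: eq_bigr => j _.
by rewrite big_cons (mulrC (A i j)%:R) mulrA.
Qed.

Lemma expsum0 b : expsum b 0 = \sum_j b j.
Proof.
apply: eq_bigr => j _; rewrite /col_dot big1 ?expR0 ?mulr1 // => i _.
by rewrite mxE mul0r.
Qed.

Lemma prod_support_col (v : bvec l) j :
  \prod_(i <- support_seq v) ((A i j)%:R : R) = (ble v (colv A j))%:R.
Proof.
have [vA|] := boolP (ble v (colv A j)).
  rewrite big_seq big1 // => i; rewrite mem_filter => /andP[vi _].
  by move/forallP/(_ i): vA; rewrite vi ffunE /= => ->.
move/forallPn => [i]; rewrite negb_imply ffunE => /andP[vi /negbTE Aij].
have iv : i \in support_seq v by rewrite mem_filter vi mem_enum.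
by rewrite (big_rem i) //= Aij mul0r.
Qed.

Lemma phi_expsum b (v : bvec l) : inB0 v ->
  phi (fun t => expsum b t - \sum_j b j) v = \sum_j b j * (ble v (colv A j))%:R.
Proof.
move=> v0; rewrite /phi mixed_partial_expsum.
case sv: (support_seq v) => [|i s].
  case/eqP: v0; apply/ffunP => i; rewrite ffunE; apply/negbTE/negP => vi.
  suff : i \in support_seq v by rewrite sv.
  by rewrite mem_filter vi mem_enum.
rewrite addr0 expsum0; apply: eq_bigr => j _.
by rewrite -sv prod_support_col.
Qed.

End ExponentialSums.

Section UpperSetInversion.
Variables (R : realType) (l : nat).
Implicit Types (v w : bvec l) (f g : bvec l -> R).

Lemma ble_refl v : ble v v.
Proof. by apply/forallP => i; rewrite implybb. Qed.

Lemma card_zeros_blt v w :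
  blt v w -> (#|[set i | ~~ w i]| < #|[set i | ~~ v i]|)%N.
Proof.
case/andP=> /forallP vw /eqP neq_vw; apply/proper_card/properP; split.
  by apply/fintype.subsetP => i; rewrite !inE; apply: contra; exact: implyP (vw i).
have [i vi_wi] : exists i, v i != w i.
  case: (pickP (fun i => v i != w i)) => [i ?|eq_vw]; first by exists i.
  by case: neq_vw; apply/ffunP => i; apply/eqP/negbFE/eq_vw.
by exists i; rewrite !inE; move: (vw i) vi_wi; case: (v i); case: (w i).
Qed.

Lemma upper_sum_inversion f g :
  (forall v, inB0 v ->
     g v = \sum_(w | inB0 w && ble v w) f w - \sum_(w | inB0 w && blt v w) g w) ->
  forall v, inB0 v -> g v = f v.
Proof.
move=> g_rec v; have [n] := ubnP #|[set i | ~~ v i]|.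
elim: n v => // n IH v zeros_v v0.
rewrite g_rec // (bigD1 v) /=; last by rewrite v0 ble_refl.
rewrite (eq_bigl (fun w => inB0 w && blt v w)); last first.
  by move=> w; rewrite /blt andbA eq_sym.
have -> : \sum_(w | inB0 w && blt v w) g w = \sum_(w | inB0 w && blt v w) f w.
  apply: eq_bigr => w /andP[w0 vw]; apply: IH w0.
  exact: leq_trans (card_zeros_blt vw) zeros_v.
by rewrite addrK.
Qed.

End UpperSetInversion.

Section Columns.
Variables (R : realType) (l q : nat) (A : 'M[bool]_(l, q)) (lambda : 'I_q -> R).

Lemma rho_neq0 v : rho A lambda v != 0 -> inColumns A v.
Proof.
rewrite /rho; case: pickP => [j colj _|_]; last by rewrite eqxx.
by apply/existsP; exists j.
Qed.

Hypothesis colA_inj : injective (colv A).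

Lemma rhoE v : rho A lambda v = \sum_j lambda j * (colv A j == v)%:R.
Proof.
rewrite /rho; case: pickP => [j /eqP colj | no_col]; last first.
  by rewrite big1 // => j _; rewrite no_col mulr0.
rewrite (bigD1 j) //= colj eqxx mulr1 big1 ?addr0 // => k neq_kj.
by rewrite -colj (inj_eq colA_inj) (negbTE neq_kj) mulr0.
Qed.

Lemma upper_sum_rho v : (forall j, inB0 (colv A j)) ->
  \sum_(w | inB0 w && ble v w) rho A lambda w =
  \sum_j lambda j * (ble v (colv A j))%:R.
Proof.
move=> colA0; under eq_bigr do rewrite rhoE.
rewrite exchange_big /=; apply: eq_bigr => j _; rewrite -mulr_sumr; congr (_ * _).
have [vA|vNA] := boolP (ble v (colv A j)).
  rewrite (bigD1 (colv A j)) /=; last by rewrite colA0 vA.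
  by rewrite eqxx big1 ?addr0 // => w /andP[_ /negbTE]; rewrite eq_sym => ->.
by rewrite big1 // => w /andP[_ vw]; case: eqP vw vNA => // <- ->.
Qed.

End Columns.

(* Unlike the library's [poisson_pmf], which is [1] everywhere at rate [0],
   this is the genuine mass function for every rate [a >= 0]. *)
Definition poisson_mass (R : realType) (a : R) (k : nat) : R :=
  a ^+ k / k`!%:R * expR (- a).

Lemma poisson_prob1 (R : realType) (a : R) k : 0 <= a ->
  poisson_prob a 0 [set k]%classic = (poisson_mass a k)%:E.
Proof.
move=> a_ge0; rewrite /poisson_prob; case: ifPn => [a_gt0|].
  by rewrite esum_set1 ?lee_fin ?poisson_pmf_ge0 // /poisson_pmf a_gt0.
rewrite -leNgt => a_le0; have -> : a = 0 by apply/eqP; rewrite eq_le a_le0.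
rewrite diracE /poisson_mass oppr0 expR0 mulr1; case: k => [|k].
  by rewrite mem_set // expr0 fact0 divr1.
by rewrite memNset // exprS !mul0r.
Qed.

Lemma poisson_mass_series_cvg (R : realType) (z a : R) :
  ((\sum_(k < n) z ^+ k * poisson_mass a k) @[n --> \oo] -->
   expR (a * (z - 1)))%classic.
Proof.
have -> : (fun n => \sum_(k < n) z ^+ k * poisson_mass a k) =
          (fun n => series (exp_coeff (z * a)) n * expR (- a)).
  apply/funext => n; rewrite /series /= big_mkord mulr_suml.
  by apply: eq_bigr => k _; rewrite /exp_coeff /poisson_mass /= exprMn !mulrA.
rewrite mulrBr mulr1 expRD mulrC; apply: cvgMr_tmp.
exact: is_cvg_series_exp_coeff.
Qed.

Lemma truncated_expr_sum (R : realType) (z : R) x N :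
  z ^+ x * (x < N)%N%:R = \sum_(k < N) z ^+ k * (x == k)%:R.
Proof.
case: (ltnP x N) => [xN|Nx].
  rewrite (bigD1 (Ordinal xN)) //= eqxx mulr1 big1 ?addr0 // => k neq_kx.
  by rewrite eq_sym -(inj_eq val_inj) /= in neq_kx; rewrite (negbTE neq_kx) mulr0.
rewrite mulr0 big1 // => k _.
by rewrite (_ : (x == k) = false) ?mulr0 // gtn_eqF // (leq_trans (ltn_ord k) Nx).
Qed.

Lemma measurable_set_nat (U : set nat) : measurable U.
Proof. by []. Qed.

Section PoissonPGF.
Variables (d : measure_display) (T : measurableType d) (R : realType).
Variables (P : probability T R) (q : nat).
Variables (X : 'I_q -> {RV P >-> nat}) (lambda : 'I_q -> R).
Hypothesis lambda_ge0 : forall j, 0 <= lambda j.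
Hypothesis X_poisson : forall j, is_poisson (X j) (lambda j).
Hypothesis X_indep : mutually_independent X.

Definition joint_event N (f : {ffun 'I_q -> 'I_N}) : set T :=
  (\bigcap_(j in [set j | j \in [set: 'I_q]%SET]) (X j @^-1` [set (f j : nat)]))%classic.

Lemma measurable_joint_event N (f : {ffun 'I_q -> 'I_N}) :
  measurable (joint_event f).
Proof.
apply: fin_bigcap_measurable; first exact: finite_finset.
by move=> j _; apply: measurable_funPTI.
Qed.

Lemma prob_joint_event N (f : {ffun 'I_q -> 'I_N}) :
  P (joint_event f) = (\prod_j poisson_mass (lambda j) (f j))%:E.
Proof.
rewrite /joint_event X_indep // -prodEFin.
apply: eq_big => [j|j _]; first by rewrite finset.in_setT.
have := @X_poisson j [set (f j : nat)]%classic (measurable_set_nat _).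
by rewrite /distribution /pushforward => ->; rewrite poisson_prob1.
Qed.

Lemma prod_eq_indic_joint_event N (f : {ffun 'I_q -> 'I_N}) w :
  \prod_j ((X j w == f j)%:R : R) = \1_(joint_event f) w.
Proof.
rewrite indicE; have [Xf|] := boolP [forall j, X j w == f j].
  have -> : w \in joint_event f by apply: mem_set => j _; exact/eqP/(forallP Xf j).
  by rewrite big1 // => j _; rewrite (forallP Xf j).
move/forallPn => [j /negbTE Xj_neq].
have -> : (w \in joint_event f) = false.
  by apply: memNset => /(_ j); rewrite /= finset.in_setT => /(_ isT) /eqP; rewrite Xj_neq.
by rewrite (bigD1 j) //= Xj_neq mul0r.
Qed.

Definition truncated_pgf (z : 'I_q -> R) N w : R :=
  \prod_j (z j ^+ X j w * (X j w < N)%N%:R).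

Lemma truncated_pgfE z N w : truncated_pgf z N w =
  \sum_(f : {ffun 'I_q -> 'I_N}) (\prod_j z j ^+ f j) * \1_(joint_event f) w.
Proof.
rewrite /truncated_pgf (eq_bigr _ (fun j _ => truncated_expr_sum (z j) (X j w) N)).
rewrite bigA_distr_bigA /=; apply: eq_bigr => f _.
by rewrite big_split /= prod_eq_indic_joint_event.
Qed.

Lemma integral_truncated_pgf (z : 'I_q -> R) N : (forall j, 0 <= z j) ->
  (\int[P]_w (truncated_pgf z N w)%:E)%E =
  (\prod_j \sum_(k < N) z j ^+ k * poisson_mass (lambda j) k)%:E.
Proof.
move=> z_ge0; under eq_integral do rewrite truncated_pgfE -sumEFin.
have coef_ge0 (f : {ffun 'I_q -> 'I_N}) : 0 <= \prod_j z j ^+ f j.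
  by apply: prodr_ge0 => j _; exact: exprn_ge0.
rewrite ge0_integral_sum //; first last.
- by move=> f w _; rewrite lee_fin mulr_ge0.
- move=> f; apply/measurable_EFinP/measurable_funM; first exact: measurable_cst.
  exact/measurable_indic/measurable_joint_event.
rewrite bigA_distr_bigA /= -sumEFin; apply: eq_bigr => f _.
under eq_integral do rewrite EFinM.
rewrite ge0_integralZl_EFin //; last first.
  exact/measurable_EFinP/measurable_indic/measurable_joint_event.
rewrite integral_indic ?setIT //; last exact: measurable_joint_event.
by rewrite big_split EFinM; congr (_ * _)%E; exact: prob_joint_event.
Qed.

Lemma truncated_pgf_lim (z : 'I_q -> R) w :
  limn (fun N => (truncated_pgf z N w)%:E) = (\prod_j z j ^+ X j w)%:E.
Proof.
apply: (lim_near_cst (@ereal_hausdorff R)).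
exists (\sum_j X j w).+1 => // N /= XN; congr (_%:E); apply: eq_bigr => j _.
rewrite (_ : (X j w < N)%N) ?mulr1 //; apply: leq_trans XN.
by rewrite ltnS (bigD1 j) //= leq_addr.
Qed.

Lemma expectation_prod_expr (z : 'I_q -> R) : (forall j, 0 <= z j) ->
  ('E_P[fun w => (\prod_j z j ^+ X j w)%R] =
   (\prod_j expR (lambda j * (z j - 1)))%:E)%E.
Proof.
move=> z_ge0.
have mtrunc N : measurable_fun [set: T]%classic (fun w => (truncated_pgf z N w)%:E).
  apply/measurable_EFinP/measurable_prod => j _.
  exact: (measurableT_comp (f := fun n : nat => z j ^+ n * (n < N)%N%:R)).
have trunc_ge0 N w : [set: T]%classic w -> (0 <= (truncated_pgf z N w)%:E)%E.
  by move=> _; rewrite lee_fin prodr_ge0 // => j _; rewrite mulr_ge0 ?exprn_ge0.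
have trunc_nd w : [set: T]%classic w ->
    nondecreasing_seq (fun N => (truncated_pgf z N w)%:E).
  move=> _ N M NM; rewrite lee_fin; apply: ler_prod => j _.
  rewrite mulr_ge0 ?exprn_ge0 //= ler_wpM2l ?exprn_ge0 // ler_nat.
  by case: ltnP => // XN; rewrite (leq_trans XN NM).
have int_cvg : ((\int[P]_w (truncated_pgf z N w)%:E)%E @[N --> \oo] -->
                (\prod_j expR (lambda j * (z j - 1)))%:E)%classic.
  under eq_fun do rewrite integral_truncated_pgf //.
  apply: cvg_EFin; first exact: nearW.
  apply: cvg_big => [|j _]; first exact: mul_continuous.
  exact: poisson_mass_series_cvg.
have mct := @cvg_monotone_convergence _ _ _ P _ measurableT _ mtrunc trunc_ge0 trunc_nd.
rewrite unlock -(cvg_lim (@ereal_hausdorff R) int_cvg).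
rewrite (cvg_lim (@ereal_hausdorff R) mct).
by apply: eq_integral => w _; rewrite truncated_pgf_lim.
Qed.

Lemma cgf_Yvec l (A : 'M[bool]_(l, q)) :
  cgf P (Yvec A X) = fun t => expsum A lambda t - \sum_j lambda j.
Proof.
apply/funext => t; rewrite /cgf.
have -> : (fun w => expR (\sum_(i < l) t ord0 i * Yvec A X i w)) =
          (fun w => \prod_j expR (col_dot A t j) ^+ X j w).
  apply/funext => w; rewrite /Yvec.
  rewrite (eq_bigr (fun i => \sum_(j < q) t ord0 i * ((A i j)%:R * (X j w)%:R)));
    last by move=> i _; rewrite mulr_sumr.
  rewrite exchange_big expR_sum; apply: eq_bigr => j _.
  rewrite -expRM_natr /col_dot mulr_suml; congr expR; apply: eq_bigr => i _.
  by rewrite mulrA.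
rewrite expectation_prod_expr; last by move=> j; exact: expR_ge0.
rewrite /= -expR_sum expRK /expsum -sumrN -big_split /=.
by apply: eq_bigr => j _; rewrite mulrBr mulr1.
Qed.

End PoissonPGF.

Theorem proposition5 (d : measure_display) (T : measurableType d)
  (R : realType) (P : probability T R) (l q : nat)
  (X : 'I_q -> {RV P >-> nat}) (lambda : 'I_q -> R)
  (A : 'M[bool]_(l, q)) (psi : bvec l -> R) :
  (forall j, 0 <= lambda j) ->
  (forall j, is_poisson (X j) (lambda j)) ->
  mutually_independent X ->
  injective (colv A) ->
  (forall j, inB0 (colv A j)) ->
  (forall v, inB0 v ->
     psi v = phi (cgf P (Yvec A X)) v
             - \sum_(w | inB0 w && blt v w) psi w) ->
  forall v, inB0 v ->
    psi v = rho A lambda v /\ (psi v != 0 -> inColumns A v).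
Proof.
move=> lambda_ge0 X_poisson X_indep colA_inj colA0 psi_rec.
have psi_rho : forall v, inB0 v -> psi v = rho A lambda v.
  apply: upper_sum_inversion => v v0.
  rewrite upper_sum_rho // -phi_expsum //.
  by rewrite -(cgf_Yvec lambda_ge0 X_poisson X_indep) psi_rec.
by move=> v v0; rewrite psi_rho //; split=> //; exact: rho_neq0.
Qed.
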